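(* For positive integers $k\le n$, $\theta_k(\ell_1,\ell_1)=1$; that is, $\max\{\|C_k(B)\|_1 : B\in\mathbb{C}^{n\times n},\ \|\mathrm{col}_i(B)\|_1=1,\ i=1,\ldots,n\}=1$.
   Context: $C_k(B)$ is the $k$th compound of $B$: the $\binom nk\times\binom nk$ matrix of all $k\times k$ minors $\det B(\alpha|\beta)$, indexed by $k$-subsets $\alpha,\beta$ of $\{1,\ldots,n\}$. $\mathrm{col}_i(B)$ is the $i$th column of $B$. For vectors $\|\cdot\|_1$ is the $\ell_1$ norm; for matrices $\|\cdot\|_1$ is the operator norm induced by the vector $\ell_1$ norm. $\theta_k(\mu,\nu)$ denotes $\max\{\mu(C_k(B)): \nu(\mathrm{col}_i(B))=1\ \forall i\}$. *)

From HB Require Import structures.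
From mathcomp Require Import all_boot all_order all_algebra.
From mathcomp Require Import complex.
From mathcomp Require Import reals.
Set Implicit Arguments. Unset Strict Implicit. Unset Printing Implicit Defensive.
Import Order.TTheory GRing.Theory Num.Theory.
Local Open Scope ring_scope.

Definition ksubset (n k : nat) := {A : {set 'I_n} | #|A| == k}.

Definition kenum n k (a : ksubset n k) : seq 'I_n := enum (val a).

(* The minor det B(alpha|beta): determinant of the k x k submatrix of B
   with rows alpha and columns beta, both in increasing order. *)
Definition minor (F : comNzRingType) n k (B : 'M[F]_n) (a b : ksubset n k) : F :=
  \det (\matrix_(i < k, j < k)
          nth 0 (nth [::] [seq [seq B r c | c <- kenum b] | r <- kenum a] i) j).

Definition compound (F : comNzRingType) n k (B : 'M[F]_n) : ksubset n k -> ksubset n k -> F :=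
  fun a b => minor B a b.

Definition l1norm (F : numDomainType) (I : finType) (x : I -> F) : F :=
  \sum_(i : I) `|x i|.

Definition mxapply (F : comNzRingType) (I : finType) (A : I -> I -> F) (x : I -> F) : I -> F :=
  fun a => \sum_(b : I) A a b * x b.

(* "The operator norm induced by the vector l1 norm of A equals c":
   ||A x||_1 <= c ||x||_1 for all x, with equality for some nonzero x. *)
Definition l1_opnorm_is (F : numDomainType) (I : finType) (A : I -> I -> F) (c : F) : Prop :=
  (forall x : I -> F, l1norm (mxapply A x) <= c * l1norm x) /\
  (exists x : I -> F, (exists i, x i != 0) /\ l1norm (mxapply A x) = c * l1norm x).

Definition cols_l1_unit (F : numDomainType) n (B : 'M[F]_n) : Prop :=
  forall j : 'I_n, \sum_(i < n) `|B i j| = 1.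
Arguments compound {F n} k B.

From mathcomp Require Import all_boot all_order all_algebra.
From mathcomp Require Import complex.
From mathcomp Require Import reals.
From mathcomp Require Import perm.
Import Order.TTheory GRing.Theory Num.Theory.
Local Open Scope ring_scope.
Set Implicit Arguments.
Unset Strict Implicit.

(* Expanding a k x k minor by the Leibniz formula, the l1 norm of the column b
   of C_k(B) is at most a sum of products |B r_1 b_1| ... |B r_k b_k| over
   pairwise distinct rows r_j, hence at most the product of the l1 norms of the
   columns b_1, ..., b_k of B.  Since the l1 operator norm is the largest
   column l1 norm, ||C_k(B)||_1 <= 1 when all columns of B are l1 unit vectors,
   and B = 1 attains the bound because C_k(1) = 1. *)

Lemma ler_sum_inj (R : numDomainType) (I J : finType) (h : I -> J) (F : J -> R) :
  injective h -> (forall j, 0 <= F j) -> \sum_i F (h i) <= \sum_j F j.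
Proof.
move=> h_inj F_ge0; rewrite -(big_imset _ (in2W h_inj)) /=.
rewrite [leRHS](bigID (mem (h @: predT))) /= lerDl.
by apply: sumr_ge0 => j _.
Qed.

Lemma normr_det_le (R : numDomainType) m (M : 'M[R]_m) :
  `|\det M| <= \sum_(s : 'S_m) \prod_i `|M (s i) i|.
Proof.
rewrite -det_tr; apply: le_trans (ler_norm_sum _ _ _) _; apply: ler_sum => s _.
rewrite normrM normr_sign mul1r normr_prod.
by under eq_bigr do rewrite mxE.
Qed.

Section KSubsets.

Variables n k : nat.
Implicit Types a b : ksubset n k.

Lemma card_ksubset a : #|val a| = k.
Proof. exact/eqP/(valP a). Qed.

Definition kelem a (i : 'I_k) : 'I_n := enum_val (cast_ord (esym (card_ksubset a)) i).

Lemma kelem_inj a : injective (kelem a).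
Proof. by move=> i j /enum_val_inj /cast_ord_inj. Qed.

Lemma kelemP a i : kelem a i \in val a.
Proof. exact: enum_valP. Qed.

Lemma kelem_onto a x : x \in val a -> exists i, kelem a i = x.
Proof.
move=> xa; exists (cast_ord (card_ksubset a) (enum_rank_in xa x)).
by rewrite /kelem cast_ordK enum_rankK_in.
Qed.

Lemma size_kenum a : size (kenum a) = k.
Proof. by rewrite /kenum -cardE; apply/eqP/(valP a). Qed.

Lemma nth_kenum a x0 (i : 'I_k) : nth x0 (kenum a) i = kelem a i.
Proof. by rewrite /kelem (enum_val_nth x0). Qed.

Lemma ksubset_subset_eq a b : val a \subset val b -> a = b.
Proof.
move=> sub_ab; apply/val_inj/eqP.
by rewrite eqEcard sub_ab card_ksubset card_ksubset /=.
Qed.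

Lemma ksubset_inhabited : (k <= n)%N -> inhabited (ksubset n k).
Proof.
move=> le_kn; constructor; apply: (exist _ [set widen_ord le_kn i | i : 'I_k]).
by rewrite card_imset ?card_ord // => i j [/val_inj].
Qed.

Lemma minorE (F : comNzRingType) (B : 'M[F]_n) a b :
  minor B a b = \det (\matrix_(i, j) B (kelem a i) (kelem b j)).
Proof.
congr (\det _); apply/matrixP => i j; rewrite !mxE.
by rewrite !(nth_map (kelem a i)) ?size_kenum // !nth_kenum.
Qed.

End KSubsets.

Lemma minor1 (F : comNzRingType) n k (a b : ksubset n k) :
  minor (1%:M : 'M[F]_n) a b = (a == b)%:R.
Proof.
rewrite minorE; have [<-|neq_ab] := eqVneq a b.
  rewrite -[RHS](det1 F k); congr (\det _); apply/matrixP => i j.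
  by rewrite !mxE (inj_eq (@kelem_inj _ _ a)).
have /subsetPn [x xa xNb] : ~~ (val a \subset val b).
  by apply: contra neq_ab => /ksubset_subset_eq ->.
case: (kelem_onto xa) xNb => i0 <- xNb.
rewrite (expand_det_row _ i0) big1 // => j _; rewrite !mxE.
have /negbTE -> : kelem a i0 != kelem b j.
  by apply: contraNneq xNb => ->; apply: kelemP.
by rewrite mulr0n mul0r.
Qed.

Lemma mxapply_compound1 (F : comNzRingType) n k (x : ksubset n k -> F) :
  mxapply (compound k (1%:M : 'M[F]_n)) x =1 x.
Proof.
move=> a; rewrite /mxapply (bigD1 a) //= /compound minor1 eqxx mul1r.
by rewrite big1 ?addr0 // => b nab; rewrite minor1 eq_sym (negbTE nab) mul0r.
Qed.

Lemma sum_normr_minor_le (F : numDomainType) n k (B : 'M[F]_n) (b : ksubset n k) :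
  \sum_a `|minor B a b| <= \prod_(j < k) \sum_(r < n) `|B r (kelem b j)|.
Proof.
pose G (f : {ffun 'I_k -> 'I_n}) := \prod_j `|B (f j) (kelem b j)|.
pose phi (p : ksubset n k * 'S_k) := [ffun j => kelem p.1 (p.2 j)].
have phi_inj : injective phi.
  move=> [a s] [a' s'] /ffunP /= phi_eq.
  have E j : kelem a (s j) = kelem a' (s' j) by have := phi_eq j; rewrite !ffunE.
  have ea : a = a'.
    apply/ksubset_subset_eq/subsetP => _ /kelem_onto [i <-].
    by rewrite -(permKV s i) E kelemP.
  by subst a'; congr pair; apply/permP => j; apply: kelem_inj (E j).
rewrite bigA_distr_bigA /=.
have G_ge0 f : 0 <= G f by apply: prodr_ge0.
apply: le_trans _ (ler_sum_inj phi_inj G_ge0).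
rewrite -(pair_bigA _ (fun a s => G (phi (a, s)))) /=; apply: ler_sum => a _.
rewrite minorE; apply: le_trans (normr_det_le _) _; apply: ler_sum => s _.
rewrite le_eqVlt; apply/orP; left.
by apply/eqP/eq_bigr => j _; rewrite !mxE ffunE.
Qed.

Lemma compound_col_l1_le1 (F : numDomainType) n k (B : 'M[F]_n) :
  (forall j, \sum_i `|B i j| <= 1) -> forall b, \sum_a `|compound k B a b| <= 1.
Proof.
move=> B_le1 b; apply: le_trans (sum_normr_minor_le B b) _.
by apply: prodr_ile1 => j _; rewrite B_le1 andbT sumr_ge0.
Qed.

Lemma l1norm_gt0 (F : numDomainType) (I : finType) (x : I -> F) :
  (exists i, x i != 0) -> 0 < l1norm x.
Proof.
move=> [i xi_neq0]; rewrite /l1norm (bigD1 i) //=.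
by rewrite ltr_pwDl ?normr_gt0 ?sumr_ge0.
Qed.

Lemma l1norm_mxapply_le (F : numDomainType) (I : finType) (A : I -> I -> F) x :
  (forall b, \sum_a `|A a b| <= 1) -> l1norm (mxapply A x) <= l1norm x.
Proof.
move=> A_le1; rewrite /l1norm /mxapply.
apply: le_trans (_ : \sum_a \sum_b `|A a b| * `|x b| <= _).
  apply: ler_sum => a _; apply: le_trans (ler_norm_sum _ _ _) _.
  by apply: ler_sum => b _; rewrite normrM.
rewrite exchange_big /=; apply: ler_sum => b _.
by rewrite -mulr_suml ler_piMl.
Qed.

Lemma l1_opnorm_is_le (F : numDomainType) (I : finType) (A : I -> I -> F) c d :
  (forall x, l1norm (mxapply A x) <= d * l1norm x) -> l1_opnorm_is A c -> c <= d.
Proof.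
move=> A_le [_ [x [/l1norm_gt0 x_gt0 Ax_eq]]].
by rewrite -(ler_pM2r x_gt0) -Ax_eq.
Qed.

Lemma l1_opnorm_is_id (F : numDomainType) (I : finType) (A : I -> I -> F) (i0 : I) :
  (forall x, mxapply A x =1 x) -> l1_opnorm_is A 1.
Proof.
move=> A_id; have l1A x : l1norm (mxapply A x) = 1 * l1norm x.
  by rewrite mul1r; apply: eq_bigr => i _; rewrite A_id.
split=> [x|]; first by rewrite l1A.
by exists (fun i => (i == i0)%:R); split; [exists i0; rewrite eqxx oner_neq0 | ].
Qed.

Lemma cols_l1_unit1 (F : numDomainType) n : cols_l1_unit (1%:M : 'M[F]_n).
Proof.
move=> j; rewrite (bigD1 j) //= big1 ?addr0 => [|i /negbTE nij].
  by rewrite mxE eqxx normr1.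
by rewrite mxE nij normr0.
Qed.

Unset Implicit Arguments.

Theorem theorem2p5 (R : realType) (n k : nat) (hk : (0 < k)%N) (hkn : (k <= n)%N) :
  (forall B : 'M[R[i]]_n, cols_l1_unit B ->
     forall c : R[i], l1_opnorm_is (compound k B) c -> c <= 1) /\
  (exists B : 'M[R[i]]_n, cols_l1_unit B /\ l1_opnorm_is (compound k B) 1).
Proof.
split=> [B B_cols c|].
  apply: l1_opnorm_is_le => x; rewrite mul1r.
  by apply/l1norm_mxapply_le/compound_col_l1_le1 => j; rewrite B_cols.
have [a0] := ksubset_inhabited hkn.
exists 1%:M; split; first exact: cols_l1_unit1.
exact: (l1_opnorm_is_id a0 (@mxapply_compound1 _ _ _)).
Qed.
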